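(* Let $f\in\mathscr C_J\setminus\mathscr C_I$, let $M=\{1,\dots,m\}$, and let $q$ be a hereditarily thrifty partial function from $X^M$ to $X$ which belongs to $\mathscr C_J$. Then $q$ can be written as a term over $f$ and finitely many partial functions belonging to $\mathscr C_I$, i.e. $q$ equals a partial function obtained by composing $f$ and finitely many partial functions in $\mathscr C_I$ (composition of partial functions being defined exactly where all inner values are defined and lie in the domain of the outer function).
   Context: $X=\omega\times\omega$, elements $(a|b)$ ($x$-coordinate $a$, $y$-coordinate $b$). Width of $Y\subseteq X$: $\sup_n|Y\cap(\omega\times\{n\})|$; $I$ = ideal of subsets of $X$ of finite width; $J$ = ideal of subsets of $X$ meeting each line $\omega\times\{n\}$ in a finite set. For an ideal $K$, $\mathscr C_K$ is the set of finitary operations $g:X^k\to X$ with $g[A^k]\in K$ for all $A\in K$; a partial function from $X^M$ to $X$ is in $\mathscr C_K$ iff it has a total extension in $\mathscr C_K$. For a finite index set $N$, $B^N_k=\{u\in X^N:\exists i\in N\,((u_i)^y<k)\}$; a subset of $X^N$ is bounded iff contained in some $B^N_k$; a partial $p$ from $X^N$ to $Y$ is thrifty iff $p^{-1}[d]$ is bounded for all $d\in Y$. For $S\subseteq M$, $T=M\setminus S$, $c\in X^S$: $p_{\cup c}$ is the partial function on $X^T$ with $p_{\cup c}(z)=p(z\cup c)$. $p$ is hereditarily thrifty iff $p_{\cup c}$ is thrifty for every proper subset $S\subsetneq M$ and every $c\in X^S$. *)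

From Stdlib Require List.
From mathcomp Require Import all_boot.
Set Implicit Arguments. Unset Strict Implicit. Unset Printing Implicit Defensive.

(* X = omega x omega; a point (a|b) is the pair (a, b): x-coordinate a = .1,
   y-coordinate b = .2 *)
Definition X := (nat * nat)%type.

Definition subset_X := X -> Prop.

Definition inJ (A : subset_X) : Prop :=
  forall n : nat, exists s : seq nat, forall a, A (a, n) -> a \in s.

Definition inI (A : subset_X) : Prop :=
  exists w : nat, forall n : nat, exists s : seq nat,
    size s <= w /\ forall a, A (a, n) -> a \in s.

Definition op (k : nat) := {ffun 'I_k -> X} -> X.
Definition pfun (N : finType) := {ffun N -> X} -> option X.

Definition image_pow (k : nat) (g : op k) (A : subset_X) : subset_X :=
  fun y => exists u : {ffun 'I_k -> X}, (forall i, A (u i)) /\ g u = y.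

Definition inC (K : subset_X -> Prop) (k : nat) (g : op k) : Prop :=
  forall A, K A -> K (image_pow g A).

Definition pinC (K : subset_X -> Prop) (k : nat) (p : pfun 'I_k) : Prop :=
  exists g : op k, inC K g /\ forall u y, p u = Some y -> g u = y.

(* a subset of X^N is bounded iff contained in some B^N_k *)
Definition bounded (N : finType) (P : {ffun N -> X} -> Prop) : Prop :=
  exists k : nat, forall u, P u -> exists i : N, (u i).2 < k.

Definition thrifty (N : finType) (p : pfun N) : Prop :=
  forall d : X, bounded (fun u => p u = Some d).

Definition glue (N : finType) (S : {set N})
    (c : {ffun {i : N | i \in S} -> X}) (z : {ffun {i : N | i \notin S} -> X})
    : {ffun N -> X} :=
  [ffun i => match (insub i : option {j : N | j \in S}) with
             | Some j => c j
             | None => match (insub i : option {j : N | j \notin S}) with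
                       | Some j => z j
                       | None => (0, 0)  (* unreachable *)
                       end
             end].

Arguments glue {N} S c z.
Definition pcup (N : finType) (p : pfun N) (S : {set N})
    (c : {ffun {i : N | i \in S} -> X}) : pfun {i : N | i \notin S} :=
  fun z => p (glue S c z).
Arguments pcup {N} p S c _.

Definition hereditarily_thrifty (N : finType) (p : pfun N) : Prop :=
  forall S : {set N}, S \proper [set: N] ->
    forall c : {ffun {i : N | i \in S} -> X}, thrifty (pcup p S c).

Definition pop := {n : nat & pfun 'I_n}.

Definition compose (m n : nat) (g : pfun 'I_n) (ts : 'I_n -> pfun 'I_m)
    : pfun 'I_m :=
  fun x => if [forall j, ts j x != None]
           then g [ffun j => odflt (0, 0) (ts j x)]
           else None.

Inductive term_fn (m : nat) (allowed : pop -> Prop) : pfun 'I_m -> Prop :=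
| tf_var (i : 'I_m) : term_fn allowed (fun x => Some (x i))
| tf_app (o : pop) (ts : 'I_(projT1 o) -> pfun 'I_m) :
    allowed o -> (forall j, term_fn allowed (ts j)) ->
    term_fn allowed (compose (projT2 o) ts).

Definition total_pop (k : nat) (f : op k) : pop :=
  existT (fun n => pfun 'I_n) k (fun u => Some (f u)).

From Stdlib Require List.
From Stdlib Require Import ClassicalEpsilon.
From mathcomp Require Import all_boot.
Set Implicit Arguments. Unset Strict Implicit. Unset Printing Implicit Defensive.

(* Theorem 12.  As f is not in C_I, f[A0^k] lies outside I for some A0 in I;
   being in J, it has arbitrarily long lines (long_lines).  Hereditary
   thriftiness of q and an extension gJ in C_J bound, for every partial
   assignment v of coordinates S and every line n, how high all unassigned
   coordinates of a tuple extending v with q-value on line n can be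
   (line_bound_exists).  So a tuple x in dom q is read one coordinate at a time
   (run); the coordinate i read at a step, with y-coordinate b, is encoded as the
   (i + m b)-th point of a long line of f[A0^k], i.e. as f applied to a chosen
   preimage in A0^k (signal, witness).  The witness coordinates have range in
   A0 + {(0, 0)}, hence lie in C_I; guarded(x, z) = q x when z lists the signals
   of x is in C_I because, inside a set of width w, the signals determine the run
   up to (w * w)^m choices (few_tuples).  Finally
   q x = guarded(x, f(witness_0 x), ..., f(witness_(m-1) x)) (representation). *)

Lemma mem_In (T : eqType) (s : seq T) (x : T) : x \in s -> List.In x s.
Proof. by elim: s => //= y s IH; rewrite inE => /orP[/eqP ->|/IH]; [left|right]. Qed.

Lemma size_flatten_le (T U : Type) (g : T -> seq U) (s : seq T) (c : nat) :
  (forall a, size (g a) <= c) -> size (flatten [seq g a | a <- s]) <= size s * c.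
Proof. by move=> Hg; elim: s => //= a s IH; rewrite size_cat mulSn leq_add. Qed.

Lemma inI_inJ (A : subset_X) : inI A -> inJ A.
Proof. by move=> [w Hw] n; have [s [_ Hs]] := Hw n; exists s. Qed.

Lemma inI_sub (A B : subset_X) : (forall p, A p -> B p) -> inI B -> inI A.
Proof.
move=> AB [w Hw]; exists w => n; have [s [Hs1 Hs2]] := Hw n.
by exists s; split => // a /AB /Hs2.
Qed.

Lemma inI_add_point (A : subset_X) (c : X) : inI A -> inI (fun p => A p \/ p = c).
Proof.
move=> [w Hw]; exists w.+1 => n; have [s [Hs1 Hs2]] := Hw n.
exists (c.1 :: s); split => // a [/Hs2 Ha|<-]; by rewrite inE ?Ha ?orbT ?eqxx.
Qed.

Lemma inI_cover (B : subset_X) : inI B -> exists w (cB : nat -> seq nat),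
  (forall b, size (cB b) <= w) /\ (forall a b, B (a, b) -> a \in cB b).
Proof.
move=> [w Hw].
pose P b (s : seq nat) := size s <= w /\ forall a, B (a, b) -> a \in s.
have HP b : P b (epsilon (inhabits [::]) (P b)) := epsilon_spec _ _ (Hw b).
exists w, (fun b => epsilon (inhabits [::]) (P b)).
by split => [b|a b]; case: (HP b) => // _; apply.
Qed.

Lemma inC_inI_of_range (n : nat) (g : op n) (R : subset_X) :
  inI R -> (forall u, R (g u)) -> inC inI g.
Proof. by move=> HR Hg A _; apply: inI_sub HR => p [u [_ <-]]. Qed.

Lemma total_pinC (K : subset_X -> Prop) (n : nat) (g : op n) :
  inC K g -> pinC K (fun u => Some (g u)).
Proof. by move=> Hg; exists g; split => // u y [<-]. Qed.

Lemma not_inC_witness (K : subset_X -> Prop) (n : nat) (g : op n) :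
  ~ inC K g -> exists A, K A /\ ~ K (image_pow g A).
Proof.
move=> Hg; apply: NNPP => Hn; apply: Hg => A HA.
by apply: NNPP => HgA; apply: Hn; exists A.
Qed.

Definition holds (P : Prop) : bool :=
  if excluded_middle_informative P then true else false.

Lemma holdsP (P : Prop) : reflect P (holds P).
Proof. by rewrite /holds; case: excluded_middle_informative => H; constructor. Qed.

Definition long_line (F : subset_X) (N : nat) (L : nat * seq nat) : Prop :=
  [/\ uniq L.2, N <= size L.2 & forall a, a \in L.2 -> F (a, L.1)].

Lemma long_lines (F : subset_X) : inJ F -> ~ inI F ->
  forall N, exists L, long_line F N L.
Proof.
move=> FJ FnotI N; apply: NNPP => nolong; apply: FnotI; exists N => n.
have [t Ht] := FJ n.
pose s := [seq a <- undup t | holds (F (a, n))].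
exists s; split; last first.
  by move=> a Fa; rewrite mem_filter mem_undup Ht // andbT; apply/holdsP.
rewrite leqNgt; apply/negP => Ns; apply: nolong; exists (n, s).
split => /=; [exact/filter_uniq/undup_uniq | exact: ltnW |].
by move=> a; rewrite mem_filter => /andP[/holdsP].
Qed.

(* i + m b encodes the pair (i, b) for i < m *)
Lemma div_encoding (m i b : nat) : i < m -> (i + m * b) %% m = i /\ (i + m * b) %/ m = b.
Proof.
move=> lt_im; have m_gt0 : 0 < m by apply: leq_ltn_trans lt_im.
rewrite addnC mulnC modnMDl modn_small // divnMDl // divn_small ?addn0 //.
Qed.

Definition var (n : nat) (i : 'I_n) : pfun 'I_n := fun x => Some (x i).

Lemma compose_defined (m n : nat) (g : pfun 'I_n) (ts : 'I_n -> pfun 'I_m)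
    (x : {ffun 'I_m -> X}) (vs : 'I_n -> X) :
  (forall j, ts j x = Some (vs j)) -> compose g ts x = g [ffun j => vs j].
Proof.
move=> Hts; rewrite /compose.
have -> : [forall j, ts j x != None] by apply/forallP => j; rewrite Hts.
by congr g; apply/ffunP => j; rewrite !ffunE Hts.
Qed.

Lemma compose_var (n : nat) (g : pfun 'I_n) (x : {ffun 'I_n -> X}) :
  compose g (@var n) x = g x.
Proof.
by rewrite (@compose_defined _ _ g _ x x) //; congr g; apply/ffunP => i; rewrite ffunE.
Qed.

Section ThriftyBound.
Variables (m : nat) (q : pfun 'I_m) (gJ : op m).
Hypothesis gJ_inJ : inC inJ gJ.
Hypothesis gJ_ext : forall u y, q u = Some y -> gJ u = y.
Hypothesis q_ht : hereditarily_thrifty q.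

Definition agree (S : {set 'I_m}) (v x : {ffun 'I_m -> X}) : Prop :=
  forall i, i \in S -> x i = v i.

Lemma glue_restrict (S : {set 'I_m}) (v x : {ffun 'I_m -> X}) : agree S v x ->
  glue S [ffun j : {i | i \in S} => v (val j)]
         [ffun j : {i | i \notin S} => x (val j)] = x.
Proof.
move=> Hag; apply/ffunP => i; rewrite ffunE.
case: insubP => [j jS ji|HS]; first by rewrite ffunE ji Hag.
by case: insubP => [j _ ji|]; [rewrite ffunE ji | rewrite HS].
Qed.

Definition escape_bound (S : {set 'I_m}) (v : {ffun 'I_m -> X}) (d : X) (K : nat) :=
  forall x, agree S v x -> q x = Some d -> exists2 i, i \notin S & (x i).2 < K.

Definition line_bound (S : {set 'I_m}) (v : {ffun 'I_m -> X}) (n K : nat) :=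
  forall d, d.2 = n -> escape_bound S v d K.

(* Thriftiness of q_{cup v|S}, phrased for full tuples. *)
Lemma thrifty_agree (S : {set 'I_m}) (v : {ffun 'I_m -> X}) (d : X) :
  S \proper [set: 'I_m] -> exists K, escape_bound S v d K.
Proof.
move=> HS; have [K HK] := q_ht HS [ffun j : {i | i \in S} => v (val j)] d.
exists K => x Hag Hq.
have [i] : exists i, ([ffun j : {i | i \notin S} => x (val j)] i).2 < K.
  by apply: HK; rewrite /pcup glue_restrict.
by rewrite ffunE => Hi; exists (val i) => //; apply: (valP i).
Qed.

(* As q extends to gJ in C_J, the values of q on tuples that agree with v on S
   and otherwise take values in a J-set meet each line in a finite set. *)
Lemma values_on_line_finite (S : {set 'I_m}) (v : {ffun 'I_m -> X}) (A : subset_X) :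
  inJ A -> forall n, exists s : seq nat, forall (x : {ffun 'I_m -> X}) a,
    (forall i, i \notin S -> A (x i)) -> agree S v x -> q x = Some (a, n) -> a \in s.
Proof.
move=> HA.
pose A' p := A p \/ exists i, p = v i.
have HA' : inJ A'.
  move=> n; have [s Hs] := HA n.
  exists (s ++ [seq (v i).1 | i <- enum 'I_m]) => a [/Hs Ha|[i Hi]].
    by rewrite mem_cat Ha.
  by rewrite mem_cat; apply/orP; right; apply/mapP; exists i; rewrite ?mem_enum -?Hi.
move=> n; have [s Hs] := gJ_inJ HA' n; exists s => x a HxA Hag Hq.
apply: Hs; exists x; split; last exact: gJ_ext.
move=> i; case: (boolP (i \in S)) => Hi; last by left; apply: HxA.
by right; exists i; apply: Hag.
Qed.

Lemma no_escaping_sequence (S : {set 'I_m}) (v : {ffun 'I_m -> X}) (n : nat)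
    (xs : nat -> {ffun 'I_m -> X}) :
  S \proper [set: 'I_m] ->
  (forall K, agree S v (xs K)) -> (forall K, exists a, q (xs K) = Some (a, n)) ->
  (forall K i, i \notin S -> K <= (xs K i).2) -> False.
Proof.
move=> HS Hag Hq Hesc.
pose A p := exists K i, i \notin S /\ p = xs K i.
have HA : inJ A.
  move=> b; exists [seq (xs K i).1 | K <- iota 0 b.+1, i <- enum 'I_m].
  move=> a [K [i [Hi Hp]]]; apply/allpairsP; exists (K, i).
  have HK : K <= b by have := Hesc K i Hi; rewrite -Hp.
  by rewrite mem_iota ltnS HK mem_enum -Hp.
have [s Hs] := @values_on_line_finite S v A HA n.
pose Ka a := epsilon (inhabits 0) (escape_bound S v (a, n)).
pose K := \max_(a <- s) Ka a.
have [a Ha] := Hq K.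
have a_in_s : a \in s by apply: (Hs (xs K)) => // i Hi; exists K, i.
have Ka_bound : escape_bound S v (a, n) (Ka a).
  by apply: epsilon_spec; apply: thrifty_agree.
have [i Hi Hlt] := Ka_bound (xs K) (Hag K) Ha.
have := Hesc K i Hi; rewrite leqNgt => /negP; apply.
exact: leq_trans Hlt (leq_bigmax_seq a a_in_s isT).
Qed.

Lemma line_bound_exists (S : {set 'I_m}) (v : {ffun 'I_m -> X}) (n : nat) :
  S \proper [set: 'I_m] -> exists K, line_bound S v n K.
Proof.
move=> HS; apply: NNPP => nobound.
pose bad K x := [/\ agree S v x, exists a, q x = Some (a, n)
                  & forall i, i \notin S -> K <= (x i).2].
have Hbad K : exists x, bad K x.
  apply: NNPP => Hno; apply: nobound; exists K => d Hd x Hag Hq.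
  apply: NNPP => Hesc; apply: Hno; exists x; split => //.
    by exists d.1; rewrite Hq -Hd -surjective_pairing.
  by move=> i Hi; rewrite leqNgt; apply/negP => Hlt; apply: Hesc; exists i.
pose xs K := epsilon (inhabits [ffun=> (0, 0)]) (bad K).
have Hxs K : bad K (xs K) := epsilon_spec _ _ (Hbad K).
by apply: (@no_escaping_sequence S v n xs) => // K; case: (Hxs K).
Qed.

End ThriftyBound.

Section Construction.
Variables (k : nat) (f : op k) (A0 : subset_X).
Hypothesis A0_inI : inI A0.
Hypothesis fA0_inJ : inJ (image_pow f A0).
Hypothesis fA0_notinI : ~ inI (image_pow f A0).
Variables (m : nat) (q : pfun 'I_m) (gJ : op m).
Hypothesis gJ_inJ : inC inJ gJ.
Hypothesis gJ_ext : forall u y, q u = Some y -> gJ u = y.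
Hypothesis q_ht : hereditarily_thrifty q.

Definition line (N : nat) : nat * seq nat :=
  epsilon (inhabits (0, [::])) (long_line (image_pow f A0) N).

Lemma lineP (N : nat) : long_line (image_pow f A0) N (line N).
Proof. by apply: epsilon_spec; apply: long_lines. Qed.

Definition preimage_spec (t : X) (u : {ffun 'I_k -> X}) : Prop :=
  (forall i, A0 (u i) \/ u i = (0, 0)) /\ (image_pow f A0 t -> f u = t).

Definition preimage (t : X) : {ffun 'I_k -> X} :=
  epsilon (inhabits [ffun=> (0, 0)]) (preimage_spec t).

Lemma preimageP (t : X) : preimage_spec t (preimage t).
Proof.
apply: epsilon_spec; have [[u [Au <-]]|nt] := classic (image_pow f A0 t).
  by exists u; split => // i; left.
by exists [ffun=> (0, 0)]; split => [i|//]; right; rewrite ffunE.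
Qed.

(* Reading a tuple x in dom q coordinate by coordinate.  A state records the
   set S of coordinates read so far and their values (on S). *)
Definition state := ({set 'I_m} * {ffun 'I_m -> X})%type.

Definition start : state := (set0, [ffun=> (0, 0)]).

Definition extend (st : state) (i : 'I_m) (p : X) : state :=
  (i |: st.1, [ffun i' => if i' == i then p else st.2 i']).

Definition bound (st : state) (n : nat) : nat :=
  epsilon (inhabits 0) (line_bound q st.1 st.2 n).

Lemma boundP (st : state) (n : nat) : st.1 \proper [set: 'I_m] ->
  line_bound q st.1 st.2 n (bound st n).
Proof.
by move=> HS; apply: epsilon_spec; apply: (line_bound_exists gJ_inJ gJ_ext q_ht).
Qed.

(* the line of f[A0^k] on which the next coordinate is encoded *)
Definition code_line (st : state) (n : nat) : nat * seq nat :=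
  line (m * bound st n).

(* the line of q x, on which the bounds are taken *)
Definition level (x : {ffun 'I_m -> X}) : nat := (odflt (0, 0) (q x)).2.

Definition chosen (x : {ffun 'I_m -> X}) (st : state) : option 'I_m :=
  [pick i | (i \notin st.1) && ((x i).2 < bound st (level x))].

Definition step (x : {ffun 'I_m -> X}) (st : state) : state :=
  if chosen x st is Some i then extend st i (x i) else st.

Definition run (x : {ffun 'I_m -> X}) (j : nat) : state := iter j (step x) start.

(* Coordinate i with y-coordinate b is encoded by the (i + m b)-th point of the
   code line, and that point by an f-preimage in A0^k. *)
Definition code (x : {ffun 'I_m -> X}) (st : state) : nat :=
  if chosen x st is Some i then i + m * (x i).2 else 0.

Definition target (x : {ffun 'I_m -> X}) (st : state) : X :=
  let L := code_line st (level x) in (nth 0 L.2 (code x st), L.1).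

Definition witness (x : {ffun 'I_m -> X}) (j : nat) : {ffun 'I_k -> X} :=
  preimage (target x (run x j)).

Definition signal (x : {ffun 'I_m -> X}) (j : nat) : X := f (witness x j).

Lemma chosen_some (x : {ffun 'I_m -> X}) (d : X) (st : state) :
  q x = Some d -> #|st.1| < m -> agree st.1 st.2 x ->
  exists i, [/\ chosen x st = Some i, i \notin st.1 & (x i).2 < bound st (level x)].
Proof.
move=> Hq Hcard Hag.
have HS : st.1 \proper [set: 'I_m] by rewrite properEcard subsetT cardsT card_ord.
have Hd : d.2 = level x by rewrite /level Hq.
have [i Hi Hlt] := boundP (n := level x) HS Hd Hag Hq.
rewrite /chosen; case: pickP => [i' /andP[]|none]; first by exists i'.
by have := none i; rewrite Hi Hlt.
Qed.

Lemma run_invariant (x : {ffun 'I_m -> X}) (d : X) : q x = Some d ->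
  forall j, j <= m -> #|(run x j).1| = j /\ agree (run x j).1 (run x j).2 x.
Proof.
move=> Hq; elim => [|j IH] Hj; first by rewrite cards0; split => // i; rewrite inE.
have [Hcard Hag] := IH (ltnW Hj).
have Hlt : #|(run x j).1| < m by rewrite Hcard.
have [i [Hi HiS _]] := chosen_some Hq Hlt Hag.
rewrite /run iterS -/(run x j) /step Hi /=; split; first by rewrite cardsU1 HiS Hcard.
by move=> i'; rewrite in_setU1 ffunE; case: eqP => [->|_] //= /Hag.
Qed.

Lemma run_complete (x : {ffun 'I_m -> X}) (d : X) : q x = Some d -> (run x m).2 = x.
Proof.
move=> Hq; have [Hcard Hag] := run_invariant Hq (leqnn m).
have Sfull : (run x m).1 = [set: 'I_m].
  by apply/eqP; rewrite eqEcard subsetT cardsT card_ord Hcard leqnn.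
by apply/ffunP => i; rewrite Hag // Sfull inE.
Qed.

Lemma signal_encodes (x : {ffun 'I_m -> X}) (d : X) (j : nat) :
  q x = Some d -> j < m -> let L := code_line (run x j) d.2 in
  exists i, [/\ chosen x (run x j) = Some i, i + m * (x i).2 < size L.2
              & signal x j = (nth 0 L.2 (i + m * (x i).2), L.1)].
Proof.
move=> Hq Hj L; have [Hcard Hag] := run_invariant Hq (ltnW Hj).
have Hlt : #|(run x j).1| < m by rewrite Hcard.
have [i [Hi _ Hbound]] := chosen_some Hq Hlt Hag.
have Hlevel : level x = d.2 by rewrite /level Hq.
have [_ Lsize Lf] := lineP (m * bound (run x j) d.2).
have c_lt : i + m * (x i).2 < size L.2.
  apply: leq_trans Lsize; apply: (@leq_trans (m + m * (x i).2)).
    by rewrite ltn_add2r ltn_ord.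
  by rewrite -mulnS leq_mul2l -Hlevel Hbound orbT.
exists i; split => //.
have tgt : target x (run x j) = (nth 0 L.2 (i + m * (x i).2), L.1).
  by rewrite /target /code Hi Hlevel.
rewrite /signal /witness; have [_ ->] := preimageP (target x (run x j)); rewrite tgt //.
by apply: Lf; rewrite mem_nth.
Qed.

(* Counting: if the coordinates of x and its signals lie in a set B of width w,
   the run of x is determined by at most w * w choices per step, since each
   signal pins down the index and y-coordinate of the next coordinate read. *)
Section Counting.
Variables (B : subset_X) (w : nat) (cB : nat -> seq nat).
Hypothesis cB_size : forall b, size (cB b) <= w.
Hypothesis cB_cover : forall a b, B (a, b) -> a \in cB b.

(* the state reached when the signal is point a of the code line and the
   coordinate read has x-coordinate a' *)
Definition decode (st : state) (n : nat) (aa' : nat * nat) : option state :=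
  let c := index aa'.1 (code_line st n).2 in
  omap (fun i => extend st i (aa'.2, c %/ m)) (insub (c %% m)).

Definition successors (st : state) (n : nat) : seq state :=
  let L := code_line st n in
  pmap (decode st n) [seq (a, a') | a <- cB L.1, a' <- cB (index a L.2 %/ m)].

Definition reachable (n j : nat) : seq state :=
  iter j (fun sts => flatten [seq successors st n | st <- sts]) [:: start].

Lemma size_successors (st : state) (n : nat) : size (successors st n) <= w * w.
Proof.
rewrite size_pmap (leq_trans (count_size _ _)) //.
apply: leq_trans (size_flatten_le (c := w) _ _) _ => [a|]; first by rewrite size_map.
by rewrite leq_mul2r cB_size orbT.
Qed.

Lemma size_reachable (n j : nat) : size (reachable n j) <= (w * w) ^ j.
Proof.
elim: j => [|j IH] //; rewrite /reachable iterS -/(reachable n j) expnSr.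
apply: leq_trans (size_flatten_le _ (@size_successors ^~ n)) _.
by rewrite leq_mul2r IH orbT.
Qed.

Lemma step_successor (x : {ffun 'I_m -> X}) (d : X) (j : nat) :
  q x = Some d -> (forall i, B (x i)) -> j < m -> B (signal x j) ->
  run x j.+1 \in successors (run x j) d.2.
Proof.
move=> Hq xB Hj sigB; have [i [Hi c_lt sig]] := signal_encodes Hq Hj.
set st := run x j in Hi c_lt sig *; set L := code_line st d.2 in c_lt sig *.
have [Luniq _ _] := lineP (m * bound st d.2).
have [c_mod c_div] := div_encoding (x i).2 (ltn_ord i).
rewrite /run iterS -/(run x j) /step Hi -/st mem_pmap.
apply/mapP; exists (nth 0 L.2 (i + m * (x i).2), (x i).1).
  apply: allpairs_f_dep; first by apply: cB_cover; rewrite -sig.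
  by rewrite index_uniq // c_div; apply: cB_cover; rewrite -surjective_pairing.
by rewrite /decode /= index_uniq // c_mod c_div valK /= -surjective_pairing.
Qed.

Lemma run_reachable (x : {ffun 'I_m -> X}) (d : X) :
  q x = Some d -> (forall i, B (x i)) -> (forall j, j < m -> B (signal x j)) ->
  forall j, j <= m -> run x j \in reachable d.2 j.
Proof.
move=> Hq xB sigB; elim => [|j IH] Hj; first by rewrite inE.
rewrite /reachable iterS -/(reachable d.2 j); apply/flatten_mapP.
by exists (run x j); [exact: IH (ltnW Hj) | exact: step_successor Hq xB Hj (sigB j Hj)].
Qed.

Lemma few_tuples (n : nat) : exists L : seq {ffun 'I_m -> X},
  size L <= (w * w) ^ m /\
  forall (x : {ffun 'I_m -> X}) d,
    (forall i, B (x i)) -> (forall j, j < m -> B (signal x j)) ->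
    q x = Some d -> d.2 = n -> x \in L.
Proof.
exists [seq st.2 | st <- reachable n m]; split; first by rewrite size_map size_reachable.
move=> x d xB sigB Hq <-; apply/mapP; exists (run x m).
  exact: run_reachable Hq xB sigB _ (leqnn m).
by rewrite (run_complete Hq).
Qed.

End Counting.

Definition guarded (u : {ffun 'I_(m + m) -> X}) : option X :=
  let x := [ffun i => u (lshift m i)] in
  if [forall j : 'I_m, u (rshift m j) == signal x j] then q x else None.

Lemma guarded_inCI : pinC inI guarded.
Proof.
exists (fun u => odflt (0, 0) (guarded u)); split => [B|u y ->] //.
move=> /inI_cover [w [cB [cB_size cB_cover]]]; exists ((w * w) ^ m).+1 => n.
have [L [Lsize Lcover]] := few_tuples cB_size cB_cover n.
exists (0 :: [seq (odflt (0, 0) (q x)).1 | x <- L]); split; first by rewrite /= size_map.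
move=> a [u [uB]]; rewrite /guarded; set x := [ffun i => u (lshift m i)].
case: ifP => [/forallP sigs|_] /=; last by case=> <- _; rewrite inE eqxx.
case Hq: (q x) => [d|] /=; last by case=> <- _; rewrite inE eqxx.
move=> Hd; rewrite inE; apply/orP; right; apply/mapP; exists x; last by rewrite Hq Hd.
have xB i : B (x i) by rewrite ffunE.
have sigB j (Hj : j < m) : B (signal x j) by have /eqP <- := sigs (Ordinal Hj).
by apply: (Lcover x d xB sigB Hq); rewrite Hd.
Qed.

Definition witness_op (j : 'I_m) (t : 'I_k) : op m := fun x => witness x j t.

Lemma witness_op_inCI (j : 'I_m) (t : 'I_k) : inC inI (witness_op j t).
Proof.
apply: (inC_inI_of_range (inI_add_point (0, 0) A0_inI)) => x.
exact: (proj1 (preimageP _)).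
Qed.

Definition guard_pop : pop := existT (fun n => pfun 'I_n) (m + m) guarded.
Definition witness_pop (j : 'I_m) (t : 'I_k) : pop :=
  existT (fun n => pfun 'I_n) m (fun u => Some (witness_op j t u)).
Definition helpers : list pop :=
  guard_pop :: [seq witness_pop jt.1 jt.2 | jt <- enum [set: 'I_m * 'I_k]].
Definition allowed (o : pop) : Prop := o = total_pop f \/ List.In o helpers.

Lemma helpers_inCI (h : pop) : List.In h helpers -> pinC inI (projT2 h).
Proof.
case=> [<-|/List.in_map_iff [jt [<- _]]]; first exact: guarded_inCI.
exact/total_pinC/witness_op_inCI.
Qed.

Definition signal_term (j : 'I_m) : pfun 'I_m :=
  compose (projT2 (total_pop f))
    (fun t => compose (projT2 (witness_pop j t)) (@var m)).

Definition arg_term (j : 'I_(m + m)) : pfun 'I_m :=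
  match split j with inl i => var i | inr j' => signal_term j' end.

Definition q_term : pfun 'I_m := compose (projT2 guard_pop) arg_term.

Lemma q_term_is_term : term_fn allowed q_term.
Proof.
apply: (tf_app (o := guard_pop)); first by right; left.
move=> j; rewrite /arg_term; case: split => [i|j']; first exact: tf_var.
apply: (tf_app (o := total_pop f)); first by left.
move=> t; apply: (tf_app (o := witness_pop j' t)); last by move=> i; apply: tf_var.
right; right; apply: (List.in_map (fun jt => witness_pop jt.1 jt.2) _ (j', t)).
by apply: mem_In; rewrite mem_enum inE.
Qed.

Lemma signal_term_eval (j : 'I_m) (x : {ffun 'I_m -> X}) :
  signal_term j x = Some (signal x j).
Proof.
rewrite /signal_term (@compose_defined _ _ _ _ x (witness x j)) => [|t].
  by congr Some; congr f; apply/ffunP => t; rewrite ffunE.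
by rewrite compose_var.
Qed.

Lemma q_term_eval (x : {ffun 'I_m -> X}) : q_term x = q x.
Proof.
pose vs (j : 'I_(m + m)) := match split j with inl i => x i | inr j' => signal x j' end.
rewrite /q_term (@compose_defined _ _ _ _ x vs) => [|j]; last first.
  by rewrite /arg_term /vs; case: split => [i|j'] //; rewrite signal_term_eval.
have left_half : [ffun i => [ffun j => vs j] (lshift m i)] = x.
  by apply/ffunP => i; rewrite !ffunE /vs -[lshift m i]/(unsplit (inl i)) unsplitK.
rewrite /= /guarded left_half.
suff -> : [forall j : 'I_m, [ffun j => vs j] (rshift m j) == signal x j] by [].
apply/forallP => j; rewrite ffunE /vs.
by rewrite -[rshift m j]/(unsplit (inr j)) unsplitK.
Qed.

Lemma representation : exists hs : list pop,
  (forall h, List.In h hs -> pinC inI (projT2 h)) /\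
  exists t : pfun 'I_m, term_fn (fun o => o = total_pop f \/ List.In o hs) t /\
    forall x, q x = t x.
Proof.
exists helpers; split; first exact: helpers_inCI.
by exists q_term; split; [exact: q_term_is_term | move=> x; rewrite q_term_eval].
Qed.

End Construction.

Theorem mainTheorem12 (k : nat) (f : op k) (m : nat) (q : pfun 'I_m) :
  inC inJ f -> ~ inC inI f ->
  hereditarily_thrifty q -> pinC inJ q ->
  exists hs : list pop,
    (forall h, List.In h hs -> pinC inI (projT2 h)) /\
    exists t : pfun 'I_m,
      term_fn (fun o => o = total_pop f \/ List.In o hs) t /\
      forall x, q x = t x.
Proof.
move=> f_inJ f_notinI q_ht [gJ [gJ_inJ gJ_ext]].
have [A0 [A0_inI fA0_notinI]] := not_inC_witness f_notinI.
have fA0_inJ : inJ (image_pow f A0) by apply/f_inJ/inI_inJ.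
exact (representation A0_inI fA0_inJ fA0_notinI gJ_inJ gJ_ext q_ht).
Qed.
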